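(* Let $\zeta\in\mathbb{C}^*$. The set $\{\operatorname{Tr} M : M\in G_q(\zeta)\}$ is finite if and only if $\zeta$ is a primitive $n$-th root of unity for some $n\in\{2,3,4,5,6\}$.
   Context: Let $q$ be a formal parameter and let $R_q=\begin{pmatrix} q & 1\\ 0 & 1\end{pmatrix}$, $S_q=\begin{pmatrix} 0 & -q^{-1}\\ 1 & 0\end{pmatrix}\in \mathrm{GL}(2,\mathbb{Z}[q,q^{-1}])$. Let $G_q=\langle R_q,S_q\rangle$ be the group they generate. For $\zeta\in\mathbb{C}^*$, set $G_q(\zeta)=\{M_q|_{q=\zeta} : M_q\in G_q\}\subset \mathrm{GL}(2,\mathbb{C})$. *)

From HB Require Import structures.
From mathcomp Require Import all_boot all_order all_algebra.
From mathcomp Require Import reals complex.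
Set Implicit Arguments. Unset Strict Implicit. Unset Printing Implicit Defensive.
Import Order.TTheory GRing.Theory Num.Theory.
Local Open Scope ring_scope.

Definition mx2 {F : nzRingType} (a b c d : F) : 'M[F]_2 :=
  \matrix_(i < 2, j < 2)
    if i == 0 then (if j == 0 then a else b) else (if j == 0 then c else d).

Definition Rmx {F : fieldType} (z : F) : 'M[F]_2 := mx2 z 1 0 1.
Definition Smx {F : fieldType} (z : F) : 'M[F]_2 := mx2 0 (- z^-1) 1 0.

(* A letter of a word in the generators R_q, S_q and their inverses:
   (true, b) stands for R_q, (false, b) for S_q; b = true means inverse. *)
Definition letter_eval {F : fieldType} (z : F) (l : bool * bool) : 'M[F]_2 :=
  let g := if l.1 then Rmx z else Smx z in
  if l.2 then invmx g else g.

Definition word_eval {F : fieldType} (z : F) (w : seq (bool * bool)) : 'M[F]_2 :=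
  foldr (fun l M => letter_eval z l *m M) 1%:M w.

(* G_q(z) = { M_q|_{q=z} : M_q in G_q }; every element of G_q = <R_q, S_q> is
   a product of the generators and their inverses, and evaluation at q = z
   (z <> 0) is a group homomorphism, so G_q(z) is the set of evaluated words. *)
Definition Gq_at {F : fieldType} (z : F) : 'M[F]_2 -> Prop :=
  fun M => exists w : seq (bool * bool), M = word_eval z w.

Definition finite_traces {F : fieldType} (z : F) : Prop :=
  exists s : seq F, forall M, Gq_at z M -> \tr M \in s.

(* If z is not a root of unity, the traces z^k + 1 of R_q^k at q = z are pairwise
   distinct.  If z is a primitive m-th root of unity with m = 1 or m >= 7, the trace of
   W^k, W = R_q^3 S_q, is the value at z of a rational polynomial, so a coincidence
   tr W^a = tr W^b transfers to the Galois conjugate w = exp(2 pi i / m).  There W / w has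
   determinant 1 and real trace 1 + 2 cos(2 pi / m) > 2, so tr W^k = w^k c_k with c_k real
   and strictly increasing, and no two of them coincide.
   Conversely, for m = 2, ..., 5 the group G_q(z) is finite, which is checked by computing
   its closure exactly in Z[z].  For m = 6 every element of G_q(z) has (1, 1 - z) as an
   eigenvector, with eigenvalue and determinant powers of z, so its trace
   lambda + det / lambda takes at most 36 values. *)

From HB Require Import structures.
From mathcomp Require Import all_boot all_order all_algebra all_field.
From mathcomp Require Import reals complex trigo.
From mathcomp Require Import ring lra.
Set Implicit Arguments.
Unset Strict Implicit.
Unset Printing Implicit Defensive.
Import Order.TTheory GRing.Theory Num.Theory.
Local Open Scope ring_scope.

Section TwoByTwo.
Variable F : comNzRingType.
Implicit Types (a b c d x y : F) (M N : 'M[F]_2).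

Ltac mx2_entrywise := apply/matrixP => -[[|[|//]] ?] -[[|[|//]] ?];
  by rewrite !mxE ?big_ord_recl ?big_ord0 ?mxE /= ?addr0.

Lemma mx2_eta M : M = mx2 (M 0 0) (M 0 1) (M 1 0) (M 1 1).
Proof.
apply/matrixP => i j; rewrite !mxE.
by case: i => [[|[|//]] ?]; case: j => [[|[|//]] ?]; congr (M _ _); apply: val_inj.
Qed.

Lemma mul_mx2 a b c d a' b' c' d' :
  mx2 a b c d *m mx2 a' b' c' d' =
  mx2 (a * a' + b * c') (a * b' + b * d') (c * a' + d * c') (c * b' + d * d').
Proof. mx2_entrywise. Qed.

Lemma scale_mx2 k a b c d : k *: mx2 a b c d = mx2 (k * a) (k * b) (k * c) (k * d).
Proof. mx2_entrywise. Qed.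

Lemma scalar_mx2 a : a%:M = mx2 a 0 0 a.
Proof. mx2_entrywise. Qed.

Lemma map_mx2 (S : nzRingType) (f : F -> S) a b c d :
  map_mx f (mx2 a b c d) = mx2 (f a) (f b) (f c) (f d).
Proof. mx2_entrywise. Qed.

Lemma mxtrace_mx2 a b c d : \tr (mx2 a b c d) = a + d.
Proof. by rewrite /mxtrace big_ord_recl big_ord1 !mxE. Qed.

Lemma det_mx2 a b c d : \det (mx2 a b c d) = a * d - b * c.
Proof.
rewrite (expand_det_row _ 0) !big_ord_recl big_ord0 /cofactor !det_mx11 !mxE /=.
by rewrite expr0 expr1; ring.
Qed.

Lemma mx2_Cayley_Hamilton M : M * M = \tr M *: M - (\det M)%:M.
Proof.
rewrite [in RHS](mx2_eta M) [in LHS](mx2_eta M) -mulmxE mul_mx2.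
rewrite mxtrace_mx2 det_mx2 scale_mx2 scalar_mx2.
apply/matrixP => i j; rewrite !mxE.
by case: i => [[|[|//]] ?]; case: j => [[|[|//]] ?] /=; ring.
Qed.

Lemma mxtrace_exprSS M k :
  \tr (M ^+ k.+2) = \tr M * \tr (M ^+ k.+1) - \det M * \tr (M ^+ k).
Proof.
rewrite !exprSr -mulrA mx2_Cayley_Hamilton mulrBr -scalerAr -exprSr.
by rewrite [_ * _%:M]mul_mx_scalar linearB /= !mxtraceZ mulrC.
Qed.

Lemma mxtrace_expr_eq M N k : \tr M = \tr N -> \det M = \det N ->
  \tr (M ^+ k) = \tr (N ^+ k).
Proof.
move=> eq_tr eq_det.
suff tr_eq2 n : \tr (M ^+ n) = \tr (N ^+ n) /\ \tr (M ^+ n.+1) = \tr (N ^+ n.+1).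
  exact: (tr_eq2 k).1.
elim: n => [|n [IH0 IH1]]; first by rewrite !expr0 !expr1.
by split; rewrite // !mxtrace_exprSS eq_tr eq_det IH0 IH1.
Qed.

Definition col2 x y : 'cV[F]_2 := \col_i (if i == 0 then x else y).

Lemma mul_mx2_col2 a b c d x y :
  mx2 a b c d *m col2 x y = col2 (a * x + b * y) (c * x + d * y).
Proof.
apply/matrixP => -[[|[|//]] ?] j;
  by rewrite !mxE !big_ord_recl big_ord0 !mxE /= addr0.
Qed.

Lemma scale_col2 k x y : k *: col2 x y = col2 (k * x) (k * y).
Proof. by apply/matrixP => -[[|[|//]] ?] j; rewrite !mxE. Qed.

Lemma col2_inj x y x' y' : col2 x y = col2 x' y' -> x = x' /\ y = y'.
Proof.
move=> /matrixP eq_xy.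
by split; [have := eq_xy 0 0 | have := eq_xy 1 0]; rewrite !mxE.
Qed.
End TwoByTwo.

Section TwoByTwoField.
Variable F : fieldType.
Implicit Types (a b c d x y : F) (M : 'M[F]_2).

Lemma invmx_mx2 a b c d : a * d - b * c != 0 ->
  invmx (mx2 a b c d) = (a * d - b * c)^-1 *: mx2 d (- b) (- c) a.
Proof.
move=> det_neq0; have unit_mx : mx2 a b c d \in unitmx.
  by rewrite unitmxE det_mx2 unitfE.
have inv_right : mx2 a b c d *m ((a * d - b * c)^-1 *: mx2 d (- b) (- c) a) = 1%:M.
  by rewrite -scalemxAr mul_mx2 scale_mx2 scalar_mx2; congr mx2; field.
by rewrite -[LHS]mulmx1 -inv_right mulKmx.
Qed.

Lemma mxtrace_eigen_mx2 M u lam : lam != 0 ->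
  M *m col2 1 u = lam *: col2 1 u -> \tr M = lam + \det M / lam.
Proof.
move=> lam_neq0; rewrite [M]mx2_eta mul_mx2_col2 scale_col2 mxtrace_mx2 det_mx2.
move=> /col2_inj[e1 e2]; rewrite !mulr1 in e1 e2; subst lam.
have -> : M 1 0 = (M 0 0 + M 0 1 * u) * u - M 1 1 * u by rewrite -e2; ring.
by field.
Qed.
End TwoByTwoField.

Lemma nat_fun_collision (T : eqType) (f : nat -> T) (s : seq T) :
  (forall a, f a \in s) -> exists a b, (a < b)%N /\ f a = f b.
Proof.
move=> f_in; set N := (size s).+1.
have sub : {subset [seq f a | a <- iota 0 N] <= s} by move=> y /mapP[a _ ->].
have /(uniqPn (f 0))[a [b [a_lt_b b_lt fab]]] : ~~ uniq [seq f a | a <- iota 0 N].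
  by apply/negP => /uniq_leq_size/(_ sub); rewrite size_map size_iota ltnn.
rewrite size_map size_iota in b_lt; have a_lt := ltn_trans a_lt_b b_lt.
by exists a, b; move: fab; rewrite !(nth_map 0) ?size_iota // !nth_iota.
Qed.

Definition RRRS_mx {F : nzRingType} (z : F) : 'M[F]_2 :=
  mx2 (1 + z + z ^+ 2) (- z ^+ 2) 1 0.

Section Words.
Variables (F : fieldType) (z : F).

Lemma word_eval_cat u v : word_eval z (u ++ v) = word_eval z u *m word_eval z v.
Proof. by elim: u => [|l u IH] /=; rewrite ?mul1mx // IH mulmxA. Qed.

Lemma Gq_at1 : Gq_at z 1.
Proof. by exists [::]. Qed.

Lemma Gq_atM M N : Gq_at z M -> Gq_at z N -> Gq_at z (M * N).
Proof. by move=> [u ->] [v ->]; exists (u ++ v); rewrite word_eval_cat. Qed.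

Lemma Gq_atX M k : Gq_at z M -> Gq_at z (M ^+ k).
Proof.
by move=> GM; elim: k => [|k IH]; [exact: Gq_at1 | rewrite exprS; apply: Gq_atM].
Qed.

Lemma Gq_at_letter l : Gq_at z (letter_eval z l).
Proof. by exists [:: l]; rewrite /= mulmx1. Qed.

Lemma Gq_at_Rmx : Gq_at z (Rmx z).
Proof. exact: Gq_at_letter (true, false). Qed.

Lemma Gq_at_Smx : Gq_at z (Smx z).
Proof. exact: Gq_at_letter (false, false). Qed.

Lemma Gq_at_ind (P : 'M[F]_2 -> Prop) :
  P 1 -> (forall l M, P M -> P (letter_eval z l *m M)) ->
  forall M, Gq_at z M -> P M.
Proof. by move=> P1 PM M [w ->]; elim: w => //= l w; apply: PM. Qed.

Lemma finite_traces_closed (L : seq 'M[F]_2) :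
  1 \in L -> (forall l M, M \in L -> letter_eval z l *m M \in L) ->
  finite_traces z.
Proof.
move=> L1 LM; exists (map mxtrace L) => M.
by move=> /(@Gq_at_ind (fun M => M \in L) L1 LM); apply: map_f.
Qed.

Lemma invmx_Rmx : z != 0 -> invmx (Rmx z) = mx2 z^-1 (- z^-1) 0 1.
Proof.
move=> z_neq0; rewrite /Rmx invmx_mx2 ?scale_mx2; last by rewrite mulr1 mulr0 subr0.
by congr mx2; field.
Qed.

Lemma invmx_Smx : z != 0 -> invmx (Smx z) = mx2 0 1 (- z) 0.
Proof.
move=> z_neq0; rewrite /Smx invmx_mx2 ?scale_mx2; last first.
  by rewrite mul0r mulr1 sub0r opprK invr_eq0.
by congr mx2; field; rewrite z_neq0 oner_neq0.
Qed.

Lemma Rmx_expr k : exists c, Rmx z ^+ k = mx2 (z ^+ k) c 0 1.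
Proof.
elim: k => [|k [c IH]]; first by exists 0; rewrite !expr0 -scalar_mx2.
by exists (z * c + 1); rewrite exprS IH -mulmxE mul_mx2; congr mx2; rewrite ?exprS; ring.
Qed.

Lemma mxtrace_Rmx_expr k : \tr (Rmx z ^+ k) = z ^+ k + 1.
Proof. by have [c ->] := Rmx_expr k; rewrite mxtrace_mx2. Qed.

Lemma RRRS_mxE : z != 0 -> Rmx z ^+ 3 * Smx z = RRRS_mx z.
Proof.
move=> z_neq0; rewrite !exprS expr0 mulr1 -!mulmxE /Rmx /Smx !mul_mx2.
by congr mx2; field.
Qed.

Lemma Gq_at_RRRS : z != 0 -> Gq_at z (RRRS_mx z).
Proof. by move=> z_neq0; rewrite -RRRS_mxE //; apply/Gq_atM/Gq_at_Smx/Gq_atX/Gq_at_Rmx. Qed.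

Lemma finite_traces_collision M : finite_traces z -> Gq_at z M ->
  exists a b, (a < b)%N /\ \tr (M ^+ a) = \tr (M ^+ b).
Proof.
move=> [s traces_in] GM; apply: nat_fun_collision => k.
exact/traces_in/Gq_atX.
Qed.
End Words.

(* An element of Z[X]/(X^d + phi) is a little-endian list of integer coefficients;
   [cyc_mulX] multiplies by X and rewrites X^d as -phi. *)
Fixpoint cyc_add (u v : seq int) : seq int :=
  match u, v with
  | [::], v => v
  | u, [::] => u
  | a :: u', b :: v' => (a + b) :: cyc_add u' v'
  end.

Definition cyc_scale (k : int) (u : seq int) : seq int := map ( *%R k) u.

Definition cyc_mulX (d : nat) (phi u : seq int) : seq int :=
  if size u == d then cyc_add (belast 0 u) (cyc_scale (- last 0 u) phi) else 0 :: u.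

Definition cyc_mul d phi (u v : seq int) : seq int :=
  foldr (fun b acc => cyc_add (cyc_scale b u) (cyc_mulX d phi acc)) (nseq d 0) v.

Definition cyc_one (d : nat) : seq int := 1 :: nseq d.-1 0.

Definition cyc_mx := (seq int * seq int * seq int * seq int)%type.

Definition cyc_mx_mul d phi (X Y : cyc_mx) : cyc_mx :=
  let: (a, b, c, e) := X in let: (a', b', c', e') := Y in
  let mul := cyc_mul d phi in
  (cyc_add (mul a a') (mul b c'), cyc_add (mul a b') (mul b e'),
   cyc_add (mul c a') (mul e c'), cyc_add (mul c b') (mul e e')).

Definition cyc_mx_one d : cyc_mx := (cyc_one d, nseq d 0, nseq d 0, cyc_one d).

(* q^-1 is represented as q^(n-1). *)
Definition cyc_letter n d phi (l : bool * bool) : cyc_mx :=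
  let one := cyc_one d in let zero := nseq d 0 in
  let q := cyc_mulX d phi one in let qinv := iter n.-1 (cyc_mulX d phi) one in
  match l with
  | (true, false) => (q, one, zero, one)
  | (false, false) => (zero, cyc_scale (-1) qinv, one, zero)
  | (true, true) => (qinv, cyc_scale (-1) qinv, zero, one)
  | (false, true) => (zero, one, cyc_scale (-1) q, zero)
  end.

Definition letters : seq (bool * bool) :=
  [:: (true, false); (false, false); (true, true); (false, true)].

Fixpoint closure_under (T : eqType) (gs : seq (T -> T)) (fuel : nat) (seen new : seq T) :=
  if fuel is fuel'.+1 then
    let next := undup [seq Y <- [seq g Y | Y <- new, g <- gs] | Y \notin seen] in
    if next is [::] then seen else closure_under gs fuel' (seen ++ next) next
  else seen.

(* Soundness only uses the final closedness test; [closure_under] merely proposes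
   the candidate list. *)
Definition gq_check n d phi : bool :=
  let gs := [seq cyc_mx_mul d phi (cyc_letter n d phi l) | l <- letters] in
  let L := closure_under gs 100 [:: cyc_mx_one d] [:: cyc_mx_one d] in
  (cyc_mx_one d \in L) && all (fun Y => all (fun g => g Y \in L) gs) L.

(* [phi] lists the lower coefficients of the cyclotomic polynomial of degree [d]. *)
Lemma gq_check2 : gq_check 2 1 [:: 1]. Proof. by vm_compute. Qed.
Lemma gq_check3 : gq_check 3 2 [:: 1; 1]. Proof. by vm_compute. Qed.
Lemma gq_check4 : gq_check 4 2 [:: 1; 0]. Proof. by vm_compute. Qed.
Lemma gq_check5 : gq_check 5 4 [:: 1; 1; 1; 1]. Proof. by vm_compute. Qed.

Section CyclotomicEvaluation.
Variables (F : fieldType) (z : F).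

Definition cyc_eval (u : seq int) : F := foldr (fun a acc => a%:~R + z * acc) 0 u.

Lemma cyc_eval_add u v : cyc_eval (cyc_add u v) = cyc_eval u + cyc_eval v.
Proof.
elim: u v => [|a u IH] [|b v] /=; rewrite ?add0r ?addr0 //.
by rewrite IH intrD; ring.
Qed.

Lemma cyc_eval_scale k u : cyc_eval (cyc_scale k u) = k%:~R * cyc_eval u.
Proof. by elim: u => [|a u IH] /=; rewrite ?mulr0 // IH intrM; ring. Qed.

Lemma cyc_eval_nseq0 k : cyc_eval (nseq k 0) = 0.
Proof. by elim: k => [|k IH] //=; rewrite IH mulr0 addr0. Qed.

Lemma cyc_eval_one d : cyc_eval (cyc_one d) = 1.
Proof. by rewrite /= cyc_eval_nseq0 mulr0 addr0. Qed.

Lemma cyc_eval_belast c u :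
  cyc_eval (belast c u) + (last c u)%:~R * z ^+ size u = c%:~R + z * cyc_eval u.
Proof.
elim: u c => [|a u IH] c /=; first by rewrite expr0 mulr1 mulr0 addr0 add0r.
by rewrite exprS -IH; ring.
Qed.

Variables (d : nat) (phi : seq int).
Hypothesis phi_reduces : cyc_eval phi = - z ^+ d.

Lemma cyc_eval_mulX u : cyc_eval (cyc_mulX d phi u) = z * cyc_eval u.
Proof.
rewrite /cyc_mulX; case: eqP => [size_u|_] /=; last by rewrite add0r.
rewrite cyc_eval_add cyc_eval_scale phi_reduces -size_u -[RHS]add0r -(cyc_eval_belast 0).
by rewrite intrN; ring.
Qed.

Lemma cyc_eval_mul u v : cyc_eval (cyc_mul d phi u v) = cyc_eval u * cyc_eval v.
Proof.
elim: v => [|b v IH] /=; first by rewrite cyc_eval_nseq0 mulr0.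
by rewrite cyc_eval_add cyc_eval_scale cyc_eval_mulX IH; ring.
Qed.

Definition cyc_mx_eval (X : cyc_mx) : 'M[F]_2 :=
  let: (a, b, c, e) := X in mx2 (cyc_eval a) (cyc_eval b) (cyc_eval c) (cyc_eval e).

Lemma cyc_mx_eval_mul X Y :
  cyc_mx_eval (cyc_mx_mul d phi X Y) = cyc_mx_eval X *m cyc_mx_eval Y.
Proof.
case: X => [[[a b] c] e]; case: Y => [[[a' b'] c'] e'].
by rewrite /= mul_mx2 !cyc_eval_add !cyc_eval_mul.
Qed.

Lemma cyc_mx_eval_one : cyc_mx_eval (cyc_mx_one d) = 1.
Proof. by rewrite /= !cyc_eval_nseq0 mulr0 addr0 -scalar_mx2. Qed.

Variable n : nat.
Hypotheses (n_gt0 : (0 < n)%N) (z_unity : z ^+ n = 1).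

Lemma cyc_mx_eval_letter l : cyc_mx_eval (cyc_letter n d phi l) = letter_eval z l.
Proof.
have z_neq0 : z != 0.
  apply/eqP => z0; move: z_unity; rewrite z0 expr0n gtn_eqF // => /eqP.
  by rewrite eq_sym oner_eq0.
have zinvE : z^-1 = z ^+ n.-1.
  by apply: (mulfI z_neq0); rewrite mulfV // -exprS prednK.
have cyc_eval_qinv : cyc_eval (iter n.-1 (cyc_mulX d phi) (cyc_one d)) = z^-1.
  by rewrite zinvE; elim: n.-1 => [|k IH]; rewrite ?cyc_eval_one //= cyc_eval_mulX IH exprS.
case: l => -[] [] /=; rewrite !cyc_eval_nseq0 mulr0 addr0 ?cyc_eval_scale.
all: rewrite ?cyc_eval_mulX ?cyc_eval_qinv ?cyc_eval_one /letter_eval /=.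
all: rewrite ?invmx_Rmx ?invmx_Smx //.
all: by congr mx2; rewrite ?mulr1 ?mulN1r.
Qed.

Lemma finite_traces_gq_check : gq_check n d phi -> finite_traces z.
Proof.
rewrite /gq_check; move: (closure_under _ _ _ _) => L /andP[L1 L_closed].
apply: (@finite_traces_closed _ z (map cyc_mx_eval L)).
  by rewrite -cyc_mx_eval_one map_f.
move=> l _ /mapP[Y YL ->]; rewrite -cyc_mx_eval_letter -cyc_mx_eval_mul map_f //.
have := allP L_closed Y YL; rewrite all_map => /allP; apply.
by case: l => -[] [].
Qed.
End CyclotomicEvaluation.

Section SixthRoot.
Variables (F : fieldType) (z : F).
Hypothesis z_root : z ^+ 2 - z + 1 = 0.

Let eq_mod_root k A B : A - B = k * (z ^+ 2 - z + 1) -> A = B.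
Proof. by rewrite z_root mulr0 => /eqP; rewrite subr_eq0 => /eqP. Qed.

Let z_neq0 : z != 0.
Proof.
by apply/eqP => z0; move: z_root; rewrite z0 expr0n /= subr0 add0r; apply/eqP/oner_neq0.
Qed.

Let z_order6 : z ^+ 6 = 1.
Proof. by apply: (eq_mod_root (k := z ^+ 4 + z ^+ 3 - z - 1)); ring. Qed.

Let zinvE : z^-1 = 1 - z.
Proof. by apply: (mulfI z_neq0); rewrite mulfV //; apply: (eq_mod_root (k := 1)); ring. Qed.

Let z5E : z ^+ 5 = 1 - z.
Proof. by apply: (eq_mod_root (k := z ^+ 3 + z ^+ 2 - 1)); ring. Qed.

Definition sixth_eigen (M : 'M[F]_2) := exists i j : nat,
  M *m col2 1 (1 - z) = z ^+ i *: col2 1 (1 - z) /\ \det M = z ^+ j.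

Lemma sixth_eigen_letter l : sixth_eigen (letter_eval z l).
Proof.
case: l => -[] [];
  [exists 0%N, 5%N | exists 0%N, 1%N | exists 5%N, 1%N | exists 1%N, 5%N].
all: rewrite /letter_eval /= ?invmx_Rmx ?invmx_Smx // /Rmx /Smx ?zinvE.
all: rewrite mul_mx2_col2 scale_col2 det_mx2 ?z5E; split; first congr col2.
all: by first [ring | apply: (eq_mod_root (k := -1)); ring
              | apply: (eq_mod_root (k := 1)); ring].
Qed.

Lemma sixth_eigen_Gq_at M : Gq_at z M -> sixth_eigen M.
Proof.
apply: Gq_at_ind; first by exists 0%N, 0%N; rewrite mul1mx scale1r det1.
move=> l N [i [j [Mv detM]]]; have [i' [j' [Lv detL]]] := sixth_eigen_letter l.
exists (i' + i)%N, (j' + j)%N; split; last by rewrite det_mulmx detL detM exprD.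
by rewrite -mulmxA Mv -scalemxAr Lv scalerA -exprD addnC.
Qed.

Lemma finite_traces_sixth : finite_traces z.
Proof.
exists [seq z ^+ a + z ^+ b / z ^+ a | a <- iota 0 6, b <- iota 0 6] => M GM.
have [i [j [Mv detM]]] := sixth_eigen_Gq_at GM.
rewrite (mxtrace_eigen_mx2 (expf_neq0 i z_neq0) Mv) detM.
rewrite -(expr_mod i z_order6) -(expr_mod j z_order6).
apply: (allpairs_f (fun a b : nat => z ^+ a + z ^+ b / z ^+ a));
  by rewrite mem_iota ltn_pmod.
Qed.
End SixthRoot.

Lemma prim_root_factor (F : idomainType) n k (z p : F) : n.-primitive_root z ->
  (0 < k < n)%N -> (z ^+ k - 1) * p = z ^+ n - 1 -> p = 0.
Proof.
move=> prim /andP[k_gt0 k_lt_n]; rewrite (prim_expr_order prim) subrr => /eqP.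
rewrite mulf_eq0 subr_eq0 -(prim_order_dvd prim) => /orP[/(dvdn_leq k_gt0)|/eqP//].
by rewrite leqNgt k_lt_n.
Qed.

Lemma finite_traces_prim (F : fieldType) (z : F) n :
  (2 <= n <= 6)%N -> n.-primitive_root z -> finite_traces z.
Proof.
move=> /andP[n_ge2 n_le6] prim; have z_unity := prim_expr_order prim.
have factor k p := @prim_root_factor F n k z p prim.
have check_sound d phi : (0 < n)%N -> cyc_eval z phi + z ^+ d = 0 ->
    gq_check n d phi -> finite_traces z.
  move=> n_gt0 /eqP; rewrite addr_eq0 => /eqP phi_reduces.
  exact: finite_traces_gq_check phi_reduces _ n_gt0 z_unity.
case: n n_ge2 n_le6 prim z_unity factor check_sound => [|[|[|[|[|[|[|n]]]]]]] //.
- move=> _ _ _ _ factor check; apply: check gq_check2 => //=.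
  by rewrite -[RHS](factor 1%N (z + 1)) //; ring.
- move=> _ _ _ _ factor check; apply: check gq_check3 => //=.
  by rewrite -[RHS](factor 1%N (z ^+ 2 + z + 1)) //; ring.
- move=> _ _ _ _ factor check; apply: check gq_check4 => //=.
  by rewrite -[RHS](factor 2%N (z ^+ 2 + 1)) //; ring.
- move=> _ _ _ _ factor check; apply: check gq_check5 => //=.
  by rewrite -[RHS](factor 1%N (z ^+ 4 + z ^+ 3 + z ^+ 2 + z + 1)) //; ring.
- move=> _ _ _ _ factor _; apply: finite_traces_sixth.
  have cube : z ^+ 3 + 1 = 0 by apply: (factor 3%N) => //; ring.
  have quartic : z ^+ 4 + z ^+ 2 + 1 = 0 by apply: (factor 2%N) => //; ring.
  have -> : z ^+ 2 - z + 1 = z ^+ 4 + z ^+ 2 + 1 - z * (z ^+ 3 + 1) by ring.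
  by rewrite quartic cube mulr0 subr0.
Qed.

Lemma horner_prod_Cyclotomic (F : idomainType) n (w : F) : (0 < n)%N ->
  \prod_(d <- divisors n) (map_poly intr 'Phi_d).[w] = w ^+ n - 1.
Proof.
move=> n_gt0; rewrite -horner_prod -rmorph_prod prod_Cyclotomic //.
by rewrite rmorphB rmorph1 /= map_polyXn !hornerE.
Qed.

Lemma root_Cyclotomic_prim (F : idomainType) n (w : F) :
  n.-primitive_root w -> root (map_poly intr 'Phi_n) w.
Proof.
move=> prim; have n_gt0 := prim_order_gt0 prim.
have /eqP := horner_prod_Cyclotomic w n_gt0.
rewrite (prim_expr_order prim) subrr prodf_seq_eq0 => /hasP[d d_div /= Phi_d_w].
have d_dvd_n : (d %| n)%N by rewrite dvdn_divisors.
have d_gt0 : (0 < d)%N := dvdn_gt0 n_gt0 d_dvd_n.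
have : w ^+ d == 1.
  rewrite -subr_eq0 -(horner_prod_Cyclotomic w d_gt0) prodf_seq_eq0.
  by apply/hasP; exists d; rewrite -?dvdn_divisors.
rewrite -(prim_order_dvd prim) => n_dvd_d.
by have /eqP <- : d == n by rewrite eqn_dvd d_dvd_n.
Qed.

Lemma map_Cyclotomic_rat (F : numFieldType) n :
  map_poly (ratr : rat -> F) (map_poly intr 'Phi_n) = map_poly intr 'Phi_n.
Proof. by rewrite -map_poly_comp; apply: eq_map_poly => a /=; apply: ratr_int. Qed.

Section RationalConjugates.
Variable F : numFieldType.

Lemma dvdp_Cyclotomic_rat n (z : F) (p : {poly rat}) :
  n.-primitive_root z -> root (map_poly ratr p) z -> map_poly intr 'Phi_n %| p.
Proof.
move=> prim pz; set Phi := map_poly intr 'Phi_n.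
set g := gcdp Phi p.
have gz : root (map_poly (ratr : rat -> F) g) z.
  by rewrite gcdp_map root_gcd pz andbT map_Cyclotomic_rat root_Cyclotomic_prim.
have [z1 gz1] : exists z1 : algC, root (map_poly ratr g) z1.
  apply/closed_rootP; rewrite size_map_poly.
  apply: contraTneq gz => /eqP/size_poly1P[c c_neq0 ->].
  by rewrite map_polyC rootC fmorph_eq0.
have [zeta prim_zeta] := C_prim_root_exists (prim_order_gt0 prim).
have prim1 : n.-primitive_root z1.
  rewrite -(root_cyclotomic prim_zeta) -(Cintr_Cyclotomic prim_zeta).
  rewrite -map_Cyclotomic_rat; apply: root_dvdp gz1; rewrite dvdp_map; exact: dvdp_gcdl.
have [p1 [min_p1 _] dvd_p1] := minCpolyP z1.
have -> : Phi = p1.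
  apply: (map_inj_poly (fmorph_inj (ratr : {rmorphism rat -> algC}))).
    by rewrite rmorph0.
  rewrite -min_p1 (minCpoly_cyclotomic prim1) map_Cyclotomic_rat.
  exact: Cintr_Cyclotomic.
by apply: dvdp_trans (dvdp_gcdr Phi p); rewrite -dvd_p1.
Qed.

Lemma root_prim_conj n (z z' : F) (p : {poly rat}) :
  n.-primitive_root z -> n.-primitive_root z' ->
  root (map_poly ratr p) z -> root (map_poly ratr p) z'.
Proof.
move=> prim prim' /(dvdp_Cyclotomic_rat prim) /dvdpP[r ->].
by rewrite rmorphM rootM /= map_Cyclotomic_rat root_Cyclotomic_prim ?orbT.
Qed.
End RationalConjugates.

Section UnitCircle.
Variable R : realType.
Local Open Scope complex_scope.

Definition cis (t : R) : R[i] := cos t +i* sin t.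

Lemma cisD s t : cis (s + t) = cis s * cis t.
Proof. by rewrite /cis cosD sinD; congr Complex; ring. Qed.

Lemma cisX t k : cis t ^+ k = cis (t *+ k).
Proof.
elim: k => [|k IH]; first by rewrite /cis cos0 sin0.
by rewrite exprS IH -cisD mulrS.
Qed.

Lemma mul_cis_conj t : cis t * (cos t -i* sin t) = 1.
Proof. by rewrite /cis; congr Complex; rewrite -?(cos2Dsin2 t); ring. Qed.

Lemma cis_neq0 t : cis t != 0.
Proof.
by apply/eqP => cis0; have /eqP := mul_cis_conj t; rewrite cis0 mul0r eq_sym oner_eq0.
Qed.

Lemma cisV_add1_add t : (cis t)^-1 + 1 + cis t = (1 + 2%:R * cos t)%:C.
Proof.
have -> : (cis t)^-1 = cos t -i* sin t.
  by rewrite -[LHS]mulr1 -(mul_cis_conj t) mulKf ?cis_neq0.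
by rewrite /cis; congr Complex => /=; ring.
Qed.

Lemma cos_neq1 (y : R) : 0 < y < pi *+ 2 -> cos y != 1.
Proof.
move=> /andP[y_gt0 y_lt2pi]; have pi_gt0 := pi_gt0 R.
have cos_lt1 (u : R) : 0 < u <= pi -> cos u != 1.
  move=> /andP[u_gt0 u_le_pi]; rewrite -cos0; apply/eqP => /cos_inj.
  rewrite !in_itv /= (ltW u_gt0) u_le_pi lexx (ltW pi_gt0) => /(_ isT isT) u0.
  by move: u_gt0; rewrite u0 ltxx.
have [y_le_pi|y_gt_pi] := lerP y pi; first by apply: cos_lt1; rewrite y_gt0.
rewrite -cosN -(cosD2pi (- y)); apply: cos_lt1; apply/andP; split; lra.
Qed.

Lemma cis_prim m : (0 < m)%N -> m.-primitive_root (cis (pi *+ 2 / m%:R)).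
Proof.
move=> m_gt0; have m_gt0R : (0 : R) < m%:R by rewrite ltr0n.
have pi_gt0 := pi_gt0 R; set t := pi *+ 2 / m%:R.
rewrite /primitive_root_of_unity m_gt0; apply/forallP => i; rewrite unity_rootE cisX.
have [->|i_neq] := eqVneq i.+1 m.
  have -> : t *+ m = pi *+ 2 by rewrite /t -mulr_natr mulfVK // gt_eqF.
  by rewrite /cis cos2pi sin2pi !eqxx.
rewrite eqbF_neg; apply: contraNneq (@cos_neq1 (t *+ i.+1) _) => [[-> _] //|].
have i_lt_m : (i.+1%:R : R) < m%:R by rewrite ltr_nat ltn_neqAle i_neq ltn_ord.
have t_gt0 : 0 < t by rewrite divr_gt0 // mulrn_wgt0.
rewrite -mulr_natr mulr_gt0 ?ltr0n //=.
by rewrite /t mulrAC ltr_pdivrMr // ltr_pM2l // mulrn_wgt0.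
Qed.

Lemma cos_pi3 : cos (pi / 3%:R) = 2%:R^-1 :> R.
Proof.
set u := pi / 3%:R; have pi_gt0 := pi_gt0 R.
have cos_u_gt0 : 0 < cos u by apply: cos_gt0_pihalf; rewrite /u; lra.
have three_u : u *+ 2 + u = pi by rewrite /u; field.
have := @cospi R; rewrite -three_u cosD cos_mulr2n sin_mulr2n => cos3u.
(* cos (3 u) = -1 factors as (c + 1) (2 c - 1)^2 = 0 with c = cos u > 0. *)
have : (cos u + 1) * (2%:R * cos u - 1) ^+ 2 =
    (cos u ^+ 2 *+ 2 - 1) * cos u - cos u * sin u *+ 2 * sin u + 1.
  have -> : cos u * sin u *+ 2 * sin u = cos u * sin u ^+ 2 *+ 2 by ring.
  by rewrite sin2cos2; ring.
by rewrite cos3u addNr => /eqP; rewrite mulf_eq0 sqrf_eq0 => /orP[] /eqP; lra.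
Qed.

Lemma cos_2pi_div_gt m : (m == 1)%N || (7 <= m)%N -> 2%:R^-1 < cos (pi *+ 2 / m%:R : R).
Proof.
have pi_gt0 := pi_gt0 R.
case/orP => [/eqP->|m_ge7]; first by rewrite divr1 cos2pi; lra.
have m_ge7R : (7%:R : R) <= m%:R by rewrite ler_nat.
have t_ge0 : 0 <= pi *+ 2 / m%:R :> R by rewrite divr_ge0 // mulrn_wge0 // ltW.
have t_lt : pi *+ 2 / m%:R < pi / 3%:R :> R.
  rewrite ltr_pdivrMr; last lra.
  rewrite mulrAC ltr_pdivlMr; last lra.
  nra.
by rewrite -cos_pi3 ltr_cos ?t_lt // !in_itv /=; apply/andP; split; lra.
Qed.
End UnitCircle.

Lemma mxtrace_map_expr (S T : comNzRingType) (f : {rmorphism S -> T}) (M : 'M[S]_2) k :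
  \tr (map_mx f M ^+ k) = f (\tr (M ^+ k)).
Proof. by rewrite -rmorphXn trace_map_mx. Qed.

Lemma mxtrace_RRRS_expr (F : numFieldType) (z : F) k :
  \tr (RRRS_mx z ^+ k) = (map_poly ratr (\tr (RRRS_mx 'X ^+ k))).[z].
Proof.
have cfu : commr_rmorph (ratr : rat -> F) z by move=> a; apply: mulrC.
have -> : RRRS_mx z = map_mx (horner_morph cfu) (RRRS_mx 'X).
  rewrite map_mx2 /horner_morph !rmorphD rmorphN !rmorph1 rmorph0 /=.
  by rewrite map_polyX map_polyXn !hornerE.
exact: (mxtrace_map_expr (horner_morph cfu)).
Qed.

Lemma mxtrace_RRRS_expr_conj (F : fieldType) (z x : F) k :
  z != 0 -> z^-1 + 1 + z = x ->
  \tr (RRRS_mx z ^+ k) = z ^+ k * \tr (mx2 x (-1) 1 0 ^+ k).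
Proof.
move=> z_neq0 <-; rewrite -mxtraceZ -exprZn; apply: mxtrace_expr_eq.
  by rewrite scale_mx2 !mxtrace_mx2; field.
by rewrite scale_mx2 !det_mx2; field.
Qed.

Lemma mxtrace_expr_lt (R : realFieldType) (x : R) a b : 2%:R < x -> (a < b)%N ->
  0 < \tr (mx2 x (-1) 1 0 ^+ a) < \tr (mx2 x (-1) 1 0 ^+ b).
Proof.
move=> x_gt2 a_lt_b; set V := mx2 x (-1) 1 0.
have trV : \tr V = x by rewrite mxtrace_mx2 addr0.
have detV : \det V = 1 by rewrite det_mx2 mulr0 mulN1r opprK add0r.
have bounds k : 0 < \tr (V ^+ k) < \tr (V ^+ k.+1).
  elim: k => [|k /andP[tr_gt0 tr_lt]].
    by rewrite expr0 expr1 mxtrace1 trV; apply/andP; split; lra.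
  by rewrite mxtrace_exprSS trV detV mul1r; apply/andP; split; nra.
have tr_incr := Order.NatMonotonyTheory.homo_ltn_lt (fun k => (andP (bounds k)).2).
by rewrite (andP (bounds a)).1 tr_incr.
Qed.

Lemma RRRS_traces_neq_cis (R : realType) m a b :
  (m == 1)%N || (7 <= m)%N -> (a < b)%N ->
  \tr (RRRS_mx (cis (pi *+ 2 / m%:R : R)) ^+ a) !=
  \tr (RRRS_mx (cis (pi *+ 2 / m%:R : R)) ^+ b).
Proof.
move=> m_cond a_lt_b; have m_gt0 : (0 < m)%N by move: m_cond; case: (m).
pose x : R := 1 + 2%:R * cos (pi *+ 2 / m%:R).
have x_gt2 : 2%:R < x by have := cos_2pi_div_gt R m_cond; rewrite /x; lra.
have /andP[tr_gt0 tr_lt] := mxtrace_expr_lt x_gt2 a_lt_b.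
rewrite !(mxtrace_RRRS_expr_conj _ (cis_neq0 _) (cisV_add1_add _)) -/x.
have -> : mx2 x%:C%C (-1) 1 0 = map_mx (real_complex R) (mx2 x (-1) 1 0).
  by rewrite map_mx2 rmorphN1 rmorph1 rmorph0.
rewrite !mxtrace_map_expr; apply/eqP => /(congr1 (fun y => y ^+ m)).
rewrite !exprMn -!exprM ![(_ * m)%N]mulnC !exprM (prim_expr_order (cis_prim R m_gt0)).
rewrite !expr1n !mul1r -!rmorphXn => /complexI/eqP.
by rewrite lt_eqF // ltrXn2r ?ltW // -lt0n.
Qed.

Lemma RRRS_traces_neq (R : realType) (z : R[i]) m a b :
  m.-primitive_root z -> (m == 1)%N || (7 <= m)%N -> (a < b)%N ->
  \tr (RRRS_mx z ^+ a) != \tr (RRRS_mx z ^+ b).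
Proof.
move=> prim m_cond a_lt_b.
rewrite !mxtrace_RRRS_expr -subr_eq0 -hornerN -hornerD -rmorphB.
apply: contraNN (RRRS_traces_neq_cis R m_cond a_lt_b).
move=> /(root_prim_conj prim (cis_prim R (prim_order_gt0 prim))).
by rewrite /root rmorphB hornerD hornerN -!mxtrace_RRRS_expr subr_eq0.
Qed.

Theorem corollary5p2 (R : realType) (z : R[i]) (hz : z != 0) :
  finite_traces z <->
  exists n : nat, (2 <= n <= 6)%N /\ n.-primitive_root z.
Proof.
split=> [fin|[n [n_range prim]]]; last exact: finite_traces_prim n_range prim.
have [a [b [a_lt_b]]] := finite_traces_collision fin (Gq_at_Rmx z).
rewrite !mxtrace_Rmx_expr => /addIr z_ab.
have z_unity : z ^+ (b - a) = 1.
  by apply: (mulfI (expf_neq0 a hz)); rewrite -exprD (subnKC (ltnW a_lt_b)) mulr1.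
have b_a_gt0 : (0 < b - a)%N by rewrite subn_gt0.
have [m prim _] := prim_order_exists b_a_gt0 z_unity.
exists m; split => //; have m_gt0 := prim_order_gt0 prim.
have [c [d [c_lt_d eq_tr]]] := finite_traces_collision fin (Gq_at_RRRS hz).
have : ~~ ((m == 1)%N || (7 <= m)%N).
  by apply/negP => /(RRRS_traces_neq prim)/(_ c_lt_d); rewrite eq_tr eqxx.
by move: m_gt0; case: (m) => [|[|[|[|[|[|[|k]]]]]]].
Qed.
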